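(* Under the setting below, for any $1\le j_1\le j_2\le H-1$, any trajectory $\tau_{j_1-1}$, any policy $\pi$, any $f\in\mathcal{F}$ and any $x\in\mathbb{R}^{|\mathcal{U}_{j_1}|}$, $$\sum_{\tau_{j_1:j_2}}\big\|M_{o_{j_2},a_{j_2},j_2;f}\cdots M_{o_{j_1},a_{j_1},j_1;f}\,x\big\|_1\,\pi(\tau_{j_1:j_2}\mid\tau_{j_1-1})\le\frac{|\mathcal{U}_A|}{\alpha}\|x\|_1,$$ where the sum is over $\tau_{j_1:j_2}=(o_{j_1},a_{j_1},\dots,o_{j_2},a_{j_2})$ and $\pi(\tau_{j_1:j_2}\mid\tau_{j_1-1})=\prod_{j=j_1}^{j_2}\pi_j(a_j\mid\tau_{j_1-1},o_{j_1},a_{j_1},\dots,o_j)$.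
   Context: Process: finite $\mathcal{O},\mathcal{A}$, horizon $H$; histories $\tau_h=(o_1,a_1,\dots,o_h,a_h)$; policies pick $a_h\sim\pi_h(\cdot\mid\tau_{h-1},o_h)$. For a model $f$: a test starting at step $h$ is $t=(o_h,\dots,o_{h+W-1},a_h,\dots,a_{h+W-2})$; $\mathbb{P}_f(t\mid\tau_{h-1})$ is the probability of observing $o_{h:h+W-1}$ when executing $a_{h:h+W-2}$ after $\tau_{h-1}$ ($0$ if unreachable). A set $\mathcal{U}_h$ of tests starting at $h$ is a core test set if for every test $t$ starting at $h$ there is a history-independent $m_{t,h;f}$ with $\mathbb{P}_f(t\mid\tau_{h-1})=\langle m_{t,h;f},q_{\tau_{h-1};f}\rangle$, $q_{\tau_{h-1};f}=[\mathbb{P}_f(u\mid\tau_{h-1})]_{u\in\mathcal{U}_h}$; $q_{0;f}=[\mathbb{P}_f(u)]_{u\in\mathcal{U}_1}$; $M_{o,a,h;f}$ has rows $m_{(o,a,u),h;f}^\top$, $u\in\mathcal{U}_{h+1}$. $\mathcal{U}_{A,h}$: action sequences in $\mathcal{U}_h$; $|\mathcal{U}_A|=\max_h|\mathcal{U}_{A,h}|$. $d_{\mathrm{PSR},h;f}$ is the rank of the matrix with entries $\mathbb{P}_f(t\mid\tau_h)$. Core matrix $K_{h;f}$ ($h\ge1$): columns $q_{\tau_h^1;f},\dots,q_{\tau_h^{d_{\mathrm{PSR},h;f}};f}$ for histories whose predictive states span all $q_{\tau_h;f}$, chosen to minimize $\|K_{h;f}^\dagger\|_{1\to1}$; $K_{0;f}=q_{0;f}$.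 Standing assumptions: $\mathcal{F}$ is a model class each of whose members is a valid PSR with core test sets $\{\mathcal{U}_h\}_{h\in[H]}$ and $\|K_{h;f}^\dagger\|_{1\to1}\le1/\alpha$ for $h\in\{0,\dots,H-1\}$; every $o\in\mathcal{O}$ belongs to $\mathcal{U}_H$. Convention: for every $f\in\mathcal{F}$ the vectors $m_{(o,a,u),h;f}$ are chosen in the column space of $K_{h-1;f}$ (such a choice exists and leaves the trajectory distributions unchanged). *)

From mathcomp Require Import all_boot all_order all_algebra.
From mathcomp Require Import reals.
Set Implicit Arguments. Unset Strict Implicit. Unset Printing Implicit Defensive.
Import Order.TTheory GRing.Theory Num.Theory.
Local Open Scope ring_scope.

Section PSR.
Variables (R : realType) (O A : finType).

Definition hist := seq (O * A).
(* a test (o_h,...,o_{h+W-1}, a_h,...,a_{h+W-2}) is encoded as the pairs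
   ((o_h,a_h),...,(o_{h+W-2},a_{h+W-2})) together with the last observation *)
Definition test := (seq (O * A) * O)%type.

(* A model f is given by its observation kernels: T tau o is the probability
   that the next observation is o after history tau. *)
Definition kernel := hist -> O -> R.

Definition valid_model (H : nat) (T : kernel) : Prop :=
  forall tau : hist, (size tau < H)%N ->
    (forall o, 0 <= T tau o) /\ \sum_(o : O) T tau o = 1.

(* probability of observing the observations of s when executing its actions,
   after history tau *)
Fixpoint seq_prob (T : kernel) (tau : hist) (s : hist) : R :=
  match s with
  | [::] => 1
  | p :: s' => T tau p.1 * seq_prob T (rcons tau p) s'
  end.

Definition reachable (T : kernel) (tau : hist) : bool := 0 < seq_prob T [::] tau.

Definition Pt (T : kernel) (tau : hist) (t : test) : R :=
  if reachable T tau then seq_prob T tau t.1 * T (tau ++ t.1) t.2 else 0.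

Definition starts_at (H h : nat) (t : test) : bool :=
  (1 <= h)%N && (h + size t.1 <= H)%N.

Variables (T : kernel) (U : nat -> seq test).

(* predictive state q_{tau;f} in R^{|U_h|}, for tau of length h-1 *)
Definition qvec (h : nat) (tau : hist) : 'cV[R]_(size (U h)) :=
  \col_i Pt T tau (tnth (in_tuple (U h)) i).

Definition Qmat (h : nat) : 'M[R]_(size (U h), #|{: (h.-1).-tuple (O * A)}|) :=
  \matrix_(i, j) qvec h (tval (@enum_val _ (mem {: (h.-1).-tuple (O * A)}) j)) i 0.

Definition K0mat (h : nat) : 'M[R]_(size (U h), 1) := \matrix_(i, j) qvec h [::] i 0.

Definition Kmat (h d : nat) (hs : 'I_d -> (h.-1).-tuple (O * A)) : 'M[R]_(size (U h), d) :=
  \matrix_(i, j) qvec h (hs j) i 0.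

Definition is_core_choice (h d : nat) (hs : 'I_d -> (h.-1).-tuple (O * A)) : bool :=
  (d == \rank (Qmat h)) && ((Qmat h)^T <= (Kmat hs)^T)%MS.

(* Moore-Penrose pseudo-inverse of a full-column-rank matrix *)
Definition pinv (m n : nat) (K : 'M[R]_(m, n)) : 'M[R]_(n, m) :=
  invmx (K^T *m K) *m K^T.

Definition norm11 (m n : nat) (M : 'M[R]_(m, n)) : R :=
  \big[Num.max/0]_(j < n) \sum_(i < m) `|M i j|.

Definition norm1 (n : nat) (v : 'cV[R]_n) : R := \sum_(i < n) `|v i 0|.

Definition pinv_bound (alpha : R) (h : nat) : Prop :=
  ((h <= 1)%N -> norm11 (pinv (K0mat h)) <= alpha^-1) /\
  ((1 < h)%N -> exists (d : nat) (hs : 'I_d -> (h.-1).-tuple (O * A)),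
    [/\ is_core_choice hs,
        (forall hs' : 'I_d -> (h.-1).-tuple (O * A),
           is_core_choice hs' -> norm11 (pinv (Kmat hs)) <= norm11 (pinv (Kmat hs')))
      & norm11 (pinv (Kmat hs)) <= alpha^-1]).

Definition in_colK (h : nat) (v : 'rV[R]_(size (U h))) : Prop :=
  ((h <= 1)%N -> (v <= (K0mat h)^T)%MS) /\
  ((1 < h)%N -> forall (d : nat) (hs : 'I_d -> (h.-1).-tuple (O * A)),
         is_core_choice hs -> (v <= (Kmat hs)^T)%MS).

Variable m : forall h : nat, test -> 'rV[R]_(size (U h)).

Definition Mmat (h : nat) (o : O) (a : A) : 'M[R]_(size (U h.+1), size (U h)) :=
  \matrix_(i, j) m h ((o, a) :: (tnth (in_tuple (U h.+1)) i).1,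
                      (tnth (in_tuple (U h.+1)) i).2) 0 j.

(* for r = rev (tau_{h:h+L-1}): M_{o_{h+L-1},a_{h+L-1},h+L-1} ... M_{o_h,a_h,h} *)
Fixpoint Mprod (h : nat) (r : seq (O * A)) : 'M[R]_(size (U (size r + h)), size (U h)) :=
  match r return 'M[R]_(size (U (size r + h)), size (U h)) with
  | [::] => 1%:M
  | p :: r' => Mmat (size r' + h) p.1 p.2 *m Mprod h r'
  end.

End PSR.

(* policies: pi tau o a = pi_h(a | tau_{h-1}, o_h) *)
Definition policy (R : realType) (O A : finType) := hist O A -> O -> A -> R.

Definition valid_policy (R : realType) (O A : finType) (H : nat) (pi : policy R O A) : Prop :=
  forall tau : hist O A, (size tau < H)%N -> forall o : O,
    (forall a, 0 <= pi tau o a) /\ \sum_(a : A) pi tau o a = 1.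

Fixpoint pol_prob (R : realType) (O A : finType) (pi : policy R O A)
    (tau : hist O A) (s : hist O A) : R :=
  match s with
  | [::] => 1
  | p :: s' => pi tau p.1 p.2 * pol_prob pi (rcons tau p) s'
  end.

Definition UA_size (O A : finType) (H : nat) (U : nat -> seq (test O A)) : nat :=
  \max_(h < H) size (undup (map (fun u : test O A => map snd u.1) (U h.+1))).

(* Let K be the core matrix at step j1 - 1 and y = K^+ x.  Every row of
   M_{o,a,j1} lies in the column space of K, so K K^+ is a right identity for
   the product of the M's, and that product applied to x equals
   sum_l y_l M q_{tau^l}.  The product maps a predictive state q_tau to
   P(s | tau) q_{tau s}, and ||q_tau'||_1 <= |U_A| because the core tests sharing
   an action sequence have probabilities summing to at most 1.  Since
   sum_s pi(s | tau) P(s | tau^l) = 1, the left-hand side is at most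
   |U_A| ||y||_1 <= |U_A| ||K^+||_{1->1} ||x||_1. *)

From mathcomp Require Import all_boot all_order all_algebra.
From mathcomp Require Import reals.
From mathcomp Require Import zify.
Import Order.TTheory GRing.Theory Num.Theory.
Local Open Scope ring_scope.
Set Implicit Arguments. Unset Strict Implicit. Unset Printing Implicit Defensive.

Lemma big_tuple0 (V : nmodType) (X : finType) (F : 0.-tuple X -> V) :
  \sum_(s : 0.-tuple X) F s = F [tuple].
Proof. by rewrite (big_pred1 [tuple]) // => s; symmetry; apply/eqP; exact: tuple0. Qed.

Lemma big_tuple_cons (V : nmodType) (X : finType) n (F : n.+1.-tuple X -> V) :
  \sum_(s : n.+1.-tuple X) F s = \sum_(x : X) \sum_(s : n.-tuple X) F [tuple of x :: s].
Proof.
rewrite pair_big (reindex (fun p : X * n.-tuple X => [tuple of p.1 :: p.2])) //=.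
exists (fun s : n.+1.-tuple X => (thead s, behead_tuple s)) => [[x s]|s] _.
  by congr (_, _); apply: val_inj.
by rewrite [in RHS](tuple_eta s); apply: val_inj.
Qed.

Lemma big_partition_undup (V : nmodType) (I K : eqType) (r : seq I)
    (key : I -> K) (F : I -> V) :
  \sum_(i <- r) F i = \sum_(k <- undup (map key r)) \sum_(i <- r | key i == k) F i.
Proof.
under [RHS]eq_bigr do rewrite big_mkcond.
rewrite exchange_big /= big_seq [RHS]big_seq; apply: eq_bigr => i ri.
rewrite -big_mkcond /= (eq_bigl (pred1 (key i))) => [|k]; last by rewrite /= eq_sym.
by rewrite -big_filter filter_pred1_uniq ?undup_uniq ?mem_undup ?map_f // big_seq1.
Qed.

Lemma sum_uniq_le_sum_inj (R : numDomainType) (I : eqType) (J : finType)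
    (g : J -> I) (r : seq I) (F : I -> R) :
  injective g -> uniq r -> {subset r <= codom g} -> (forall j, 0 <= F (g j)) ->
  \sum_(i <- r) F i <= \sum_j F (g j).
Proof.
move=> g_inj r_uniq r_sub F_ge0.
have r_perm : perm_eq r [seq i <- image g predT | i \in r].
  apply: uniq_perm => [//||i]; first by rewrite filter_uniq // map_inj_uniq ?enum_uniq.
  by rewrite mem_filter andb_idr // => /r_sub.
rewrite -big_image [X in _ <= X](bigID (mem r)) /= -[X in _ <= X + _]big_filter.
rewrite -(perm_big _ r_perm) lerDl.
rewrite big_image_cond; apply: sumr_ge0 => j _; exact: F_ge0.
Qed.

Lemma gram_unitmx (R : realFieldType) n d (K : 'M[R]_(n, d)) :
  row_free K^T -> K^T *m K \in unitmx.
Proof.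
move=> K_free; rewrite -row_free_unit -kermx_eq0.
set W := kermx _.
suff : W *m K^T = 0 by move/eqP; rewrite mulmx_free_eq0.
apply/row_matrixP => i; rewrite row_mul row0.
set z := row i W *m K^T.
have : (z *m z^T) 0 0 = 0.
  by rewrite /z trmx_mul trmxK mulmxA -(mulmxA (row i W)) -row_mul mulmx_ker row0 !mul0mx mxE.
rewrite mxE => /psumr_eq0P zz0; apply/rowP => j.
have /eqP : z 0 j * z^T j 0 = 0 by apply: zz0 => // k _; rewrite [z^T _ _]mxE -expr2 sqr_ge0.
by rewrite [z^T _ _]mxE -expr2 sqrf_eq0 [RHS]mxE => /eqP.
Qed.

Lemma mulmx_pinv_proj (R : realType) n d (K : 'M[R]_(n, d)) (v : 'rV[R]_n) :
  K^T *m K \in unitmx -> (v <= K^T)%MS -> v *m (K *m pinv K) = v.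
Proof. by move=> KK_unit /submxP[w ->]; rewrite /pinv !mulmxA -(mulmxA w) mulmxK. Qed.

Lemma norm1_ge0 (R : realType) n (v : 'cV[R]_n) : 0 <= norm1 v.
Proof. by apply: sumr_ge0 => i _; apply: normr_ge0. Qed.

Lemma norm1_scale (R : realType) n (c : R) (v : 'cV[R]_n) :
  norm1 (c *: v) = `|c| * norm1 v.
Proof. by rewrite /norm1 mulr_sumr; apply: eq_bigr => i _; rewrite mxE normrM. Qed.

Lemma norm1_sum_le (R : realType) n (I : finType) (v : I -> 'cV[R]_n) :
  norm1 (\sum_l v l) <= \sum_l norm1 (v l).
Proof.
rewrite /norm1 exchange_big /=; apply: ler_sum => i _.
by rewrite summxE; apply: ler_norm_sum.
Qed.

Lemma norm1_mulmx_le (R : realType) n k (M : 'M[R]_(n, k)) (x : 'cV[R]_k) :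
  norm1 (M *m x) <= norm11 M * norm1 x.
Proof.
rewrite /norm1 mulr_sumr.
apply: (@le_trans _ _ (\sum_i \sum_j `|M i j| * `|x j 0|)).
  apply: ler_sum => i _; rewrite mxE; apply: le_trans (ler_norm_sum _ _ _) _.
  by apply: ler_sum => j _; rewrite normrM.
rewrite exchange_big /=; apply: ler_sum => j _; rewrite -mulr_suml ler_wpM2r //.
exact: (le_bigmax _ (fun j => \sum_i `|M i j|)).
Qed.

Section Model.
Variables (R : realType) (O A : finType) (H : nat) (T : kernel R O A).

Lemma seq_prob_cat tau s1 s2 :
  seq_prob T tau (s1 ++ s2) = seq_prob T tau s1 * seq_prob T (tau ++ s1) s2.
Proof.
elim: s1 tau => [|p s1 IH] tau /=; first by rewrite cats0 mul1r.
by rewrite IH cat_rcons mulrA.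
Qed.

Lemma seq_prob_rcons tau s p :
  seq_prob T tau (rcons s p) = seq_prob T tau s * T (tau ++ s) p.1.
Proof. by rewrite -cats1 seq_prob_cat /= mulr1. Qed.

Hypothesis T_valid : valid_model H T.

Lemma kernel_ge0 tau o : (size tau < H)%N -> 0 <= T tau o.
Proof. by move=> /T_valid[]. Qed.

Lemma seq_prob_ge0 tau s : (size tau + size s <= H)%N -> 0 <= seq_prob T tau s.
Proof.
elim: s tau => [|p s IH] tau /= le_H; first exact: ler01.
by rewrite mulr_ge0 ?kernel_ge0 ?IH ?size_rcons ?addSnnS //; lia.
Qed.

Lemma Pt_ge0 tau t : (size tau + size t.1 < H)%N -> 0 <= Pt T tau t.
Proof.
move=> lt_H; rewrite /Pt; case: ifP => // _.
by rewrite mulr_ge0 ?seq_prob_ge0 ?kernel_ge0 ?size_cat // ltnW.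
Qed.

Lemma Pt_cons tau o a l o' : (size tau < H)%N ->
  Pt T tau ((o, a) :: l, o') = T tau o * Pt T (rcons tau (o, a)) (l, o').
Proof.
move=> lt_H; have T_ge0 : 0 <= T tau o by exact: kernel_ge0.
rewrite /Pt /reachable /= seq_prob_rcons /=.
have [T0|Tpos] := eqVneq (T tau o) 0; first by rewrite T0 mulr0 !mul0r !if_same.
have {}Tpos : 0 < T tau o by rewrite lt_def Tpos.
by rewrite pmulr_lgt0 //; case: ifP; rewrite ?mulr0 // cat_rcons mulrA.
Qed.

Lemma sum_seq_prob_zip (b : seq A) tau : (size tau + size b <= H)%N ->
  \sum_(obs : (size b).-tuple O) seq_prob T tau (zip obs b) = 1.
Proof.
elim: b tau => [|a b IH] tau /= le_H; first by rewrite big_tuple0.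
have /T_valid[_ <-] : (size tau < H)%N by lia.
rewrite big_tuple_cons; apply: eq_bigr => o _; rewrite -mulr_sumr IH ?mulr1 // size_rcons; lia.
Qed.

Lemma sum_Pt_zip_le1 (b : seq A) tau : (size tau + size b < H)%N ->
  \sum_(y : (size b).-tuple O * O) Pt T tau (zip y.1 b, y.2) <= 1.
Proof.
move=> lt_H; rewrite -(pair_big xpredT xpredT (fun (obs : (size b).-tuple O) o =>
  Pt T tau (zip obs b, o))) /=.
rewrite /Pt; case: (reachable T tau); last by rewrite !big1.
rewrite (eq_bigr (fun obs : (size b).-tuple O => seq_prob T tau (zip obs b))) => [|obs _ /=].
  by rewrite (sum_seq_prob_zip (ltnW lt_H)).
by rewrite -mulr_sumr (proj2 (T_valid _)) ?mulr1 // size_cat size_zip size_tuple minnn.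
Qed.

Definition test_actions (u : test O A) : seq A := map snd u.1.

Lemma sum_Pt_same_actions_le1 (r : seq (test O A)) (b : seq A) tau :
  uniq r -> (size tau + size b < H)%N ->
  \sum_(u <- r | test_actions u == b) Pt T tau u <= 1.
Proof.
move=> r_uniq lt_H; rewrite -big_filter.
(* A test with action sequence [b] is determined by its observations. *)
pose g (y : (size b).-tuple O * O) : test O A := (zip y.1 b, y.2).
apply: le_trans (sum_Pt_zip_le1 lt_H).
apply: (@sum_uniq_le_sum_inj _ _ _ g) => [[x1 o1] [x2 o2] [ex eo]||u|y].
- congr (_, _) => //; apply: val_inj.
  by rewrite /= -(@unzip1_zip _ _ x1 b) ?size_tuple // ex unzip1_zip ?size_tuple.
- exact: filter_uniq.
- rewrite mem_filter => /andP[/eqP b_u _]; apply/codomP.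
  have size_obs : size (map fst u.1) == size b by rewrite -b_u !size_map.
  by exists (Tuple size_obs, u.2); rewrite /g /= -b_u zip_unzip -surjective_pairing.
- by apply: Pt_ge0; rewrite /= size_zip size_tuple minnn.
Qed.
End Model.

Section Policy.
Variables (R : realType) (O A : finType) (H : nat) (pi : policy R O A).
Hypothesis pi_valid : valid_policy H pi.

Lemma pol_prob_ge0 tau s : (size tau + size s <= H)%N -> 0 <= pol_prob pi tau s.
Proof.
elim: s tau => [|p s IH] tau /= le_H; first exact: ler01.
have /pi_valid/(_ p.1)[pi_ge0 _] : (size tau < H)%N by lia.
by rewrite mulr_ge0 ?IH ?size_rcons ?addSnnS.
Qed.

Lemma sum_pol_prob_seq_prob (T : kernel R O A) n tau tau' :
  valid_model H T -> (size tau + n <= H)%N -> (size tau' + n <= H)%N ->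
  \sum_(s : n.-tuple (O * A)) pol_prob pi tau s * seq_prob T tau' s = 1.
Proof.
move=> T_valid; elim: n tau tau' => [|n IH] tau tau' le_H le_H'.
  by rewrite big_tuple0 /= mulr1.
have /T_valid[_ <-] : (size tau' < H)%N by lia.
rewrite big_tuple_cons.
transitivity (\sum_(p : O * A) pi tau p.1 p.2 * T tau' p.1).
  apply: eq_bigr => p _; under eq_bigr do rewrite /= mulrACA.
  by rewrite -mulr_sumr IH ?mulr1 // size_rcons; lia.
rewrite -(pair_big xpredT xpredT (fun o a => pi tau o a * T tau' o)) /=.
have /pi_valid pi_sum1 : (size tau < H)%N by lia.
by apply: eq_bigr => o _; rewrite -mulr_suml (proj2 (pi_sum1 o)) mul1r.
Qed.
End Policy.

Section PSR.
Variables (R : realType) (O A : finType) (H : nat) (T : kernel R O A).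
Variables (U : nat -> seq (test O A)) (m : forall h, test O A -> 'rV[R]_(size (U h))).
Hypothesis T_valid : valid_model H T.
Hypothesis U_core : forall h, (1 <= h <= H)%N -> uniq (U h) /\ all (starts_at H h) (U h).

Lemma norm1_qvec_le h tau : (1 <= h <= H)%N -> size tau = h.-1 ->
  norm1 (qvec T U h tau) <= (size (undup (map (@test_actions O A) (U h))))%:R.
Proof.
move=> h_range tau_size; have [U_uniq /allP U_starts] := U_core h_range.
have Pt_defined u : u \in U h -> (size tau + size u.1 < H)%N.
  by move=> /U_starts /andP[h_ge1]; rewrite tau_size -(prednK h_ge1) addSn.
rewrite /norm1 (eq_bigr (fun i => Pt T tau (tnth (in_tuple (U h)) i))); last first.
  by move=> i _; rewrite mxE ger0_norm // (Pt_ge0 T_valid) ?Pt_defined ?mem_tnth.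
rewrite -(big_tnth _ _ _ xpredT) (big_partition_undup _ (@test_actions O A)).
rewrite -sum1_size natr_sum [X in _ <= X]big_seq [X in X <= _]big_seq.
apply: ler_sum => b; rewrite mem_undup => /mapP[u /Pt_defined lt_H ->].
by apply: (sum_Pt_same_actions_le1 T_valid) => //; rewrite size_map.
Qed.

Lemma norm1_qvec_le_UA h tau : (1 <= h <= H)%N -> size tau = h.-1 ->
  norm1 (qvec T U h tau) <= (UA_size H U)%:R.
Proof.
move=> h_range tau_size; apply: le_trans (norm1_qvec_le h_range tau_size) _.
have /andP[h_ge1 h_le] := h_range; have lt_H : (h.-1 < H)%N by lia.
rewrite ler_nat /UA_size -[in X in (X <= _)%N](prednK h_ge1).
exact: (@leq_bigmax _ (fun i : 'I_H => size (undup (map _ (U i.+1)))) (Ordinal lt_H)).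
Qed.

Lemma starts_at_U h i : (1 <= h <= H)%N -> starts_at H h (tnth (in_tuple (U h)) i).
Proof. by move=> /U_core[_ /allP]; apply; apply: mem_tnth. Qed.

Lemma starts_at_cons h (p : O * A) (t : test O A) : (1 <= h)%N -> starts_at H h.+1 t ->
  starts_at H h (p :: t.1, t.2).
Proof. by rewrite /starts_at /= addnS => ->. Qed.

Hypothesis m_predicts : forall h, (1 <= h <= H)%N -> forall t, starts_at H h t ->
  forall tau : (h.-1).-tuple (O * A), Pt T tau t = (m h t *m qvec T U h tau) 0 0.

Lemma Mmat_qvec h tau o a : (1 <= h < H)%N -> size tau = h.-1 ->
  Mmat m h o a *m qvec T U h tau = T tau o *: qvec T U h.+1 (rcons tau (o, a)).
Proof.
move=> h_range tau_size; apply/matrixP => i j; rewrite ord1 !mxE.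
set u := tnth (in_tuple (U h.+1)) i.
have u_starts : starts_at H h.+1 u by apply: starts_at_U; lia.
have h_ge1 : (1 <= h)%N by lia.
have /m_predicts/(_ _ (starts_at_cons (o, a) h_ge1 u_starts)) : (1 <= h <= H)%N by lia.
move=> /(_ (Tuple (introT eqP tau_size))) /=.
rewrite (Pt_cons T_valid); last by rewrite tau_size; lia.
rewrite [u in RHS]surjective_pairing => ->; rewrite mxE.
by apply: eq_bigr => k _; rewrite !mxE.
Qed.

Lemma Mprod_cons h p r :
  Mprod m h (p :: r) = Mmat m (size r + h) p.1 p.2 *m Mprod m h r.
Proof. by []. Qed.

Lemma Mprod_qvec h tau r : (1 <= h)%N -> size tau = h.-1 -> (size r + h <= H)%N ->
  Mprod m h r *m qvec T U h tau
  = seq_prob T tau (rev r) *: qvec T U (size r + h) (tau ++ rev r).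
Proof.
move=> h_ge1 tau_size; elim: r => [|p r IH] le_H.
  by rewrite mul1mx scale1r cats0.
have lt_H : (size r + h < H)%N by move: le_H; rewrite addSn.
have Mmat_step : Mmat m (size r + h) p.1 p.2 *m qvec T U (size r + h) (tau ++ rev r)
    = T (tau ++ rev r) p.1 *: qvec T U (size r + h).+1 (rcons (tau ++ rev r) p).
  rewrite [p in rcons _ p]surjective_pairing; apply: Mmat_qvec; first by lia.
  by rewrite size_cat size_rev tau_size; lia.
rewrite Mprod_cons -mulmxA IH; last exact: ltnW.
by rewrite -scalemxAr Mmat_step scalerA rev_cons seq_prob_rcons -rcons_cat.
Qed.

Lemma Mprod_mulmx_fixed h (P : 'M[R]_(size (U h))) r :
  (forall o a, Mmat m h o a *m P = Mmat m h o a) -> r != [::] ->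
  Mprod m h r *m P = Mprod m h r.
Proof.
move=> Mmat_fixed; elim: r => [|p [|q r] IH] // _.
  by rewrite Mprod_cons -mulmxA mul1mx mulmx1 Mmat_fixed.
by rewrite Mprod_cons -mulmxA IH.
Qed.

Lemma Mmat_mulmx_fixed h (P : 'M[R]_(size (U h))) : (1 <= h < H)%N ->
  (forall t, starts_at H h t -> m h t *m P = m h t) ->
  forall o a, Mmat m h o a *m P = Mmat m h o a.
Proof.
move=> h_range m_fixed o a; apply/row_matrixP => i; rewrite row_mul.
set u := tnth (in_tuple (U h.+1)) i.
have -> : row i (Mmat m h o a) = m h ((o, a) :: u.1, u.2) by apply/rowP => k; rewrite !mxE.
by apply/m_fixed/starts_at_cons/starts_at_U; lia.
Qed.

Lemma core_choice_row_free h d (hs : 'I_d -> (h.-1).-tuple (O * A)) :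
  is_core_choice T U hs -> row_free (Kmat T U hs)^T.
Proof.
move=> /andP[/eqP d_rank Q_sub]; apply/eqP/anti_leq; rewrite rank_leq_row /=.
by rewrite [X in (X <= _)%N]d_rank -mxrank_tr mxrankS.
Qed.

Variable alpha : R.
Hypothesis m_colK : forall h, (1 <= h <= H)%N -> forall t : test O A, starts_at H h t ->
  in_colK T (m h t).
Hypothesis pinv_bounded : forall h, (1 <= h <= H)%N -> pinv_bound T U alpha h.

Lemma exists_core_projector h : (1 <= h < H)%N ->
  exists d (hs : 'I_d -> (h.-1).-tuple (O * A)),
    norm11 (pinv (Kmat T U hs)) <= alpha^-1 /\
    forall o a, Mmat m h o a *m (Kmat T U hs *m pinv (Kmat T U hs)) = Mmat m h o a.
Proof.
move=> h_range; have h_range' : (1 <= h <= H)%N by lia.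
have [h_gt1 | h_le1] := ltnP 1 h.
  have [_ /(_ h_gt1) [d [hs [hs_core _ hs_bound]]]] := pinv_bounded h_range'.
  exists d, hs; split => //; apply: Mmat_mulmx_fixed => // t t_starts.
  have [_ /(_ h_gt1 d hs hs_core) t_sub] := m_colK h_range' t_starts.
  exact/(mulmx_pinv_proj _ t_sub)/gram_unitmx/core_choice_row_free.
have h1 : h = 1%N by lia.
subst h; exists 1%N, (fun=> [tuple]).
have -> : Kmat T U (h := 1) (fun=> [tuple]) = K0mat T U 1 by apply/matrixP => i j; rewrite !mxE.
split; first by have [/(_ (leqnn 1))] := pinv_bounded h_range'.
apply: Mmat_mulmx_fixed => // t t_starts.
have [/(_ (leqnn 1)) t_sub _] := m_colK h_range' t_starts.
(* [K0mat T U 1] has a single column, so it is either free or zero. *)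
have [K0_free | K0_not_free] := boolP (row_free (K0mat T U 1)^T).
  exact: mulmx_pinv_proj (gram_unitmx K0_free) t_sub.
have K0_0 : (K0mat T U 1)^T = 0.
  apply/eqP; rewrite -mxrank_eq0.
  by move: K0_not_free (rank_leq_row (K0mat T U 1)^T); rewrite /row_free; lia.
by move: t_sub; rewrite K0_0 => /submx0null ->; rewrite mul0mx.
Qed.

Variable pi : policy R O A.
Hypothesis pi_valid : valid_policy H pi.

Lemma Mprod_Kmat h d (hs : 'I_d -> (h.-1).-tuple (O * A)) (y : 'cV[R]_d) s :
  (1 <= h)%N -> (size s + h <= H)%N ->
  Mprod m h (rev s) *m (Kmat T U hs *m y)
  = \sum_l (y l 0 * seq_prob T (hs l) s) *: qvec T U (size (rev s) + h) (hs l ++ s).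
Proof.
move=> h_ge1 le_H.
have -> : Kmat T U hs *m y = \sum_l y l 0 *: qvec T U h (hs l).
  apply/matrixP => i j; rewrite ord1 !mxE summxE; apply: eq_bigr => l _.
  by rewrite !mxE mulrC.
rewrite mulmx_sumr; apply: eq_bigr => l _.
by rewrite -scalemxAr Mprod_qvec ?size_tuple ?size_rev ?revK ?scalerA.
Qed.

Lemma norm1_Mprod_Kmat_le h d (hs : 'I_d -> (h.-1).-tuple (O * A)) (y : 'cV[R]_d) s :
  (1 <= h)%N -> (size s + h <= H)%N ->
  norm1 (Mprod m h (rev s) *m (Kmat T U hs *m y))
  <= \sum_l `|y l 0| * (UA_size H U)%:R * seq_prob T (hs l) s.
Proof.
move=> h_ge1 le_H; rewrite Mprod_Kmat //; apply: le_trans (norm1_sum_le _) _.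
apply: ler_sum => l _.
have sp_ge0 : 0 <= seq_prob T (hs l) s.
  by apply: (seq_prob_ge0 T_valid); rewrite size_tuple; lia.
rewrite norm1_scale normrM (ger0_norm sp_ge0) mulrAC ler_wpM2r // ler_wpM2l //.
by rewrite norm1_qvec_le_UA ?size_cat ?size_tuple ?size_rev //; lia.
Qed.

Lemma sum_norm1_Mprod_Kmat_le h n tau d (hs : 'I_d -> (h.-1).-tuple (O * A))
    (y : 'cV[R]_d) :
  (1 <= h)%N -> (n + h <= H)%N -> size tau = h.-1 ->
  \sum_(s : n.-tuple (O * A))
     norm1 (Mprod m h (rev s) *m (Kmat T U hs *m y)) * pol_prob pi tau s
  <= (UA_size H U)%:R * norm1 y.
Proof.
move=> h_ge1 le_H tau_size.
have pointwise (s : n.-tuple (O * A)) :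
    norm1 (Mprod m h (rev s) *m (Kmat T U hs *m y)) * pol_prob pi tau s
    <= \sum_l `|y l 0| * (UA_size H U)%:R * (pol_prob pi tau s * seq_prob T (hs l) s).
  under eq_bigr do rewrite [pol_prob _ _ _ * _]mulrC mulrA.
  rewrite -mulr_suml ler_wpM2r ?norm1_Mprod_Kmat_le ?size_tuple //.
  by apply: (pol_prob_ge0 pi_valid); rewrite size_tuple; lia.
apply: le_trans (ler_sum _ (fun s _ => pointwise s)) _.
rewrite exchange_big /= (eq_bigr (fun l => `|y l 0| * (UA_size H U)%:R)) => [|l _].
  by rewrite -mulr_suml mulrC.
rewrite -mulr_sumr (sum_pol_prob_seq_prob pi_valid T_valid) ?mulr1 ?size_tuple //; lia.
Qed.
End PSR.

Theorem lemma10 (R : realType) (O A : finType) (H : nat)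
    (T : kernel R O A) (U : nat -> seq (test O A))
    (m : forall h : nat, test O A -> 'rV[R]_(size (U h)))
    (alpha : R) (pi : policy R O A) :
  0 < alpha ->
  valid_model H T ->
  (forall h, (1 <= h <= H)%N -> uniq (U h) /\ all (starts_at H h) (U h)) ->
  (forall h, (1 <= h <= H)%N -> forall t : test O A, starts_at H h t ->
     (forall tau : (h.-1).-tuple (O * A),
        Pt T tau t = (m h t *m qvec T U h tau) 0 0)
     /\ in_colK T (m h t)) ->
  (forall h, (1 <= h <= H)%N -> pinv_bound T U alpha h) ->
  (forall o : O, ([::], o) \in U H) ->
  valid_policy H pi ->
  forall (j1 j2 : nat), (1 <= j1)%N -> (j1 <= j2)%N -> (j2 <= H.-1)%N ->
  forall (tau : hist O A), size tau = j1.-1 ->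
  forall x : 'cV[R]_(size (U j1)),
    \sum_(s : (j2 - j1).+1.-tuple (O * A))
       norm1 (Mprod m j1 (rev s) *m x) * pol_prob pi tau s
    <= ((UA_size H U)%:R / alpha) * norm1 x.
Proof.
move=> _ T_valid U_core m_core pinv_bounded _ pi_valid j1 j2 j1_ge1 j12 j2_le tau tau_size x.
have m_predicts h h_range t t_starts := proj1 (m_core h h_range t t_starts).
have m_colK h h_range t t_starts := proj2 (m_core h h_range t t_starts).
have j1_range : (1 <= j1 < H)%N by lia.
have [d [hs [K_bound K_proj]]] :=
  exists_core_projector U_core m_colK pinv_bounded j1_range.
set K := Kmat T U hs.
have Mprod_x (s : (j2 - j1).+1.-tuple (O * A)) :
    Mprod m j1 (rev s) *m x = Mprod m j1 (rev s) *m (K *m (pinv K *m x)).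
  by rewrite (mulmxA K) mulmxA Mprod_mulmx_fixed // -size_eq0 size_rev size_tuple.
under eq_bigr do rewrite Mprod_x.
apply: le_trans (sum_norm1_Mprod_Kmat_le T_valid U_core m_predicts pi_valid
  hs _ j1_ge1 _ tau_size) _; first by lia.
rewrite -mulrA ler_wpM2l //; apply: le_trans (norm1_mulmx_le _ _) _.
by rewrite ler_wpM2r ?norm1_ge0.
Qed.
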